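(* For all real $s,t\in(0,\infty)$, every integer $n\ge 2$ and every $\sigma\in(0,2]$, $$n\,t^{n+\sigma}-(n+\sigma)\,t^n s^{\sigma}+\sigma\, s^{n+\sigma}\ \ge\ \sigma\, s^{n+\sigma-2}(t-s)^2 .$$ *)

From Stdlib Require Import Reals.

(* Write t = s e^u. Both sides are homogeneous of degree n + sigma in (s, t), so
   after dividing by s^(n+sigma) the claim becomes, for x = e^u,
     n x^n e^(sigma u) - (n + sigma) x^n + sigma >= sigma (x - 1)^2.
   Since e^(sigma u) >= 1 + sigma u, the left side is at least
   sigma (x^n (n u - 1) + 1). The sequence x^n (n u - 1) is nondecreasing in n,
   so for n >= 2 it dominates x^2 (2 u - 1) >= x^2 - 2 x, which is the claim. *)

From Stdlib Require Import Reals Lra Psatz.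
Open Scope R_scope.

Lemma exp_tangent_ge0 (u : R) : 0 <= exp u * u - exp u + 1.
Proof.
  assert (Hinv : exp (- u) * exp u = 1).
  { rewrite <- exp_plus, Rplus_opp_l; exact exp_0. }
  pose proof (exp_ineq1_le (- u)); pose proof (exp_pos u); nra.
Qed.

Lemma mul_exp_sub1_ge0 (u : R) : 0 <= u * (exp u - 1).
Proof.
  destruct (Rle_or_lt 0 u) as [Hu | Hu].
  - pose proof (exp_ineq1_le u); nra.
  - assert (Hlt : exp u < 1) by (rewrite <- exp_0; apply exp_increasing, Hu).
    nra.
Qed.

Lemma pow_exp_mul_sub1_leS (u : R) (n : nat) :
  exp u ^ n * (INR n * u - 1) <= exp u ^ S n * (INR (S n) * u - 1).
Proof.
  rewrite S_INR; simpl pow.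
  assert (Hdiff : exp u * (exp u ^ n * ((INR n + 1) * u - 1)) - exp u ^ n * (INR n * u - 1)
    = exp u ^ n * ((exp u * u - exp u + 1) + INR n * (u * (exp u - 1)))) by ring.
  assert (Hpos : 0 <= exp u ^ n * ((exp u * u - exp u + 1) + INR n * (u * (exp u - 1)))).
  { apply Rmult_le_pos; [apply pow_le, Rlt_le, exp_pos |].
    pose proof (exp_tangent_ge0 u); pose proof (mul_exp_sub1_ge0 u).
    pose proof (pos_INR n); nra. }
  lra.
Qed.

Lemma pow_exp_mul_sub1_le (u : R) (m n : nat) : (m <= n)%nat ->
  exp u ^ m * (INR m * u - 1) <= exp u ^ n * (INR n * u - 1).
Proof.
  induction 1 as [| n _ IH]; [lra |].
  pose proof (pow_exp_mul_sub1_leS u n); lra.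
Qed.

Lemma lemma2p2_normalized (u sigma : R) (n : nat) : (2 <= n)%nat -> 0 <= sigma ->
  sigma * (exp u - 1) ^ 2
  <= INR n * exp u ^ n * exp (sigma * u) - (INR n + sigma) * exp u ^ n + sigma.
Proof.
  intros Hn Hsigma.
  assert (Hpow : 0 < exp u ^ n) by (apply pow_lt, exp_pos).
  assert (Hn_ge0 : 0 <= INR n) by apply pos_INR.
  assert (Htangent : INR n * exp u ^ n * (1 + sigma * u)
                     <= INR n * exp u ^ n * exp (sigma * u)).
  { apply Rmult_le_compat_l; [nra | apply exp_ineq1_le]. }
  assert (Hmono : exp u ^ 2 * (2 * u - 1) <= exp u ^ n * (INR n * u - 1))
    by exact (pow_exp_mul_sub1_le u 2 n Hn).
  assert (Hquad : (exp u - 1) ^ 2 <= exp u ^ n * (INR n * u - 1) + 1).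
  { pose proof (exp_tangent_ge0 u); pose proof (exp_pos u); simpl in Hmono |- *; nra. }
  nra.
Qed.

Lemma Rpower_exp (u a : R) : Rpower (exp u) a = exp (a * u).
Proof. unfold Rpower; rewrite ln_exp; reflexivity. Qed.

Lemma Rpower_sub2 (s a : R) : 0 < s -> Rpower s (a - 2) = Rpower s a / s ^ 2.
Proof.
  intro Hs; unfold Rminus, Rdiv.
  rewrite Rpower_plus, Rpower_Ropp, <- (Rpower_pow 2 s Hs); simpl INR.
  replace (1 + 1) with 2 by ring; reflexivity.
Qed.

Theorem lemma2p2 (s t : R) (n : nat) (sigma : R)
  (hs : 0 < s) (ht : 0 < t) (hn : (2 <= n)%nat)
  (hsig0 : 0 < sigma) (hsig2 : sigma <= 2) :
  INR n * Rpower t (INR n + sigma)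
    - (INR n + sigma) * t ^ n * Rpower s sigma
    + sigma * Rpower s (INR n + sigma)
  >= sigma * Rpower s (INR n + sigma - 2) * (t - s) ^ 2.
Proof.
  set (u := ln (t / s)).
  assert (Ht : t = s * exp u)
    by (unfold u; rewrite exp_ln; [field | apply Rdiv_lt_0_compat]; lra).
  assert (Hscale : Rpower (s * exp u) (INR n + sigma)
                   = Rpower s (INR n + sigma) * (exp u ^ n * exp (sigma * u))).
  { rewrite <- Rpower_mult_distr, Rpower_plus with (z := exp u), Rpower_pow, Rpower_exp;
      [reflexivity | apply exp_pos | exact hs | apply exp_pos]. }
  assert (Hsplit : Rpower s (INR n + sigma) = s ^ n * Rpower s sigma)
    by (rewrite Rpower_plus, Rpower_pow; [reflexivity | exact hs]).
  assert (Hc : 0 < s ^ n * Rpower s sigma)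
    by (apply Rmult_lt_0_compat; [apply pow_lt, hs | apply exp_pos]).
  rewrite Ht, Hscale, Rpower_sub2, Hsplit, Rpow_mult_distr by exact hs.
  replace (sigma * (s ^ n * Rpower s sigma / s ^ 2) * (s * exp u - s) ^ 2)
    with ((s ^ n * Rpower s sigma) * (sigma * (exp u - 1) ^ 2)) by (field; lra).
  pose proof (lemma2p2_normalized u sigma n hn (Rlt_le _ _ hsig0)).
  apply Rle_ge.
  replace (INR n * (s ^ n * Rpower s sigma * (exp u ^ n * exp (sigma * u)))
             - (INR n + sigma) * (s ^ n * exp u ^ n) * Rpower s sigma
             + sigma * (s ^ n * Rpower s sigma))
    with ((s ^ n * Rpower s sigma)
          * (INR n * exp u ^ n * exp (sigma * u) - (INR n + sigma) * exp u ^ n + sigma))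
    by ring.
  apply Rmult_le_compat_l; lra.
Qed.
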